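(* (i) There exists a measurable map $\Psi:\Gamma\to B$ such that for every $a\in\Gamma$, $\beta=\Psi(a)$ satisfies $a=\sigma\sigma'+\sigma\beta+\beta'\sigma'$. (ii) There exists a measurable map $\Phi:B\to\prod_{i=1}^d[-\kappa^-_i,\kappa^+_i]$ such that $v_i\beta+\Phi(\beta)\in\prod_{j=1}^d[-\kappa^-_j,\kappa^+_j]$ for all $i=1,\dots,d+1$ and all $\beta\in B$.
   Context: Let $\sigma$ be an invertible $d\times d$ matrix, $\kappa^\pm_i\ge0$ for $i=1,\dots,d$, and $v_1,\dots,v_{d+1}\in\mathbb{R}^d$ row vectors forming a regular simplex with $\langle v_i,v_j\rangle=-1$ ($i\ne j$), $\sum_j v_j=0$, $\sum_j v_j'v_j=(d+1)I$. $B$ is the set of $d\times d$ matrices $\beta=[\beta_1\cdots\beta_d]$ whose $k$-th column is $\beta_k=\sum_{j=1}^{d+1}w_{jk}v_j'$ for some $w_{jk}\in[0,(\kappa^+_k+\kappa^-_k)/(d+1)]$, and $\Gamma=\{\sigma\sigma'+\sigma\beta+\beta'\sigma':\beta\in B\}$. $v_i\beta$ is the row vector obtained by multiplying the row vector $v_i$ by $\beta$. *)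

From HB Require Import structures.
From mathcomp Require Import all_boot all_order all_algebra.
From mathcomp Require Import all_classical all_reals all_analysis.
Set Implicit Arguments. Unset Strict Implicit. Unset Printing Implicit Defensive.
Import Order.TTheory GRing.Theory Num.Theory.
Import numFieldNormedType.Exports.
Local Open Scope classical_set_scope.
Local Open Scope ring_scope.

Definition borel_set (T : topologicalType) (A : set T) : Prop := <<s open >> A.

Definition borel_measurable_on (T U : topologicalType) (D : set T) (f : T -> U) : Prop :=
  forall V : set U, open V -> borel_set (D `&` f @^-1` V).

Definition Bset (R : realType) (d : nat) (v : 'I_d.+1 -> 'rV[R]_d)
  (kp km : 'I_d -> R) : set 'M[R]_d :=
  [set beta | exists w : 'I_d.+1 -> 'I_d -> R,
     (forall j k, 0 <= w j k <= (kp k + km k) / d.+1%:R) /\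
     (forall k, col k beta = \sum_(j < d.+1) w j k *: (v j)^T)].

Definition Gammaset (R : realType) (d : nat) (sigma : 'M[R]_d) (Bs : set 'M[R]_d)
  : set 'M[R]_d :=
  [set sigma *m sigma^T + sigma *m beta + beta^T *m sigma^T | beta in Bs].

Definition box (R : realType) (d : nat) (kp km : 'I_d -> R) : set 'rV[R]_d :=
  [set x | forall j, - km j <= x ord0 j <= kp j].

From HB Require Import structures.
From mathcomp Require Import all_boot all_order all_algebra.
From mathcomp Require Import all_classical all_reals all_analysis.
From mathcomp Require Import lra ring.
Import Order.TTheory GRing.Theory Num.Theory.
Import numFieldNormedType.Exports.
Local Open Scope classical_set_scope.
Local Open Scope ring_scope.

(* B is the image of a box of weights under the linear map W |-> V^T W, where V
   has rows v_j; hence B is compact and convex, while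
   beta |-> sigma sigma^T + sigma beta + beta^T sigma^T is continuous and affine.
   Psi(a) is the unique minimiser of the strictly convex squared Frobenius norm
   on the fibre of a.  For closed F, Psi(a) lies outside F exactly when some
   rational level separates that minimum from the minimum over the fibre inside
   F; the corresponding sublevel sets have closed images, so Psi is Borel.
   For (ii), x_ik := (v_i beta)_k = (d+1) w_ik - sum_j w_jk, so for fixed k the
   x_ik sum to zero and spread by at most kp_k + km_k; shifting by
   -km_k - min_i x_ik then lands in the box, continuously in beta. *)

Section matrix_continuity.
Variable K : numFieldType.

Lemma continuous_mx (T : topologicalType) m n (f : T -> 'M[K]_(m, n)) :
  (forall i j, continuous (fun x => f x i j)) -> continuous f.
Proof.
move=> fc x; apply/cvg_ballP => e e0.
have fe ij : \forall y \near x, ball (f x ij.1 ij.2) e (f y ij.1 ij.2).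
  by move: (fc ij.1 ij.2 x) => /cvg_ballP; apply.
by apply: filterS (filter_forall _ fe) => y fye; split => // i j; exact: fye (i, j).
Qed.

Lemma continuous_sum (T : topologicalType) (I : Type) (r : seq I)
    (f : I -> T -> K) :
  (forall i, continuous (f i)) -> continuous (fun x => \sum_(i <- r) f i x).
Proof. by move=> fc; apply: continuous_big => [|i _]; [exact: add_continuous|exact: fc]. Qed.

Lemma continuous_mulmxl m n p (A : 'M[K]_(m, n)) :
  continuous (fun B : 'M[K]_(n, p) => A *m B).
Proof.
apply: continuous_mx => i j; under eq_fun do rewrite mxE.
apply: continuous_sum => k B.
exact: continuousM (@cst_continuous _ _ _ B) (@coord_continuous _ _ _ k j B).
Qed.

Lemma continuous_mulmxr m n p (B : 'M[K]_(n, p)) :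
  continuous (fun A : 'M[K]_(m, n) => A *m B).
Proof.
apply: continuous_mx => i j; under eq_fun do rewrite mxE.
apply: continuous_sum => k A.
exact: continuousM (@coord_continuous _ _ _ i k A) (@cst_continuous _ _ _ A).
Qed.

Lemma continuous_trmx m n : continuous (@trmx K m n).
Proof. by apply: continuous_mx => i j; under eq_fun do rewrite mxE; exact: coord_continuous. Qed.

End matrix_continuity.

Lemma continuous_bigmin (R : realType) (T : topologicalType) (I : Type) (r : seq I)
    (f0 : T -> R) (F : I -> T -> R) :
  continuous f0 -> (forall i, continuous (F i)) ->
  continuous (fun x => \big[Order.min/f0 x]_(i <- r) F i x).
Proof.
move=> cont_f0 cont_F; elim: r => [|i r IHr].
  by under [fun x => _]funext do rewrite big_nil.
under [fun x => _]funext do rewrite big_cons.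
by move=> x; exact: continuous_min (cont_F i x) (IHr x).
Qed.

Lemma compact_mx_box (R : realType) m n (lo hi : 'M[R]_(m, n)) :
  compact [set M : 'M[R]_(m, n) | forall i j, lo i j <= M i j <= hi i j].
Proof.
pose rbox := [set u : 'rV[R]_(m * n) |
  forall k, `[mxvec lo ord0 k, mxvec hi ord0 k]%classic (u ord0 k)].
have -> : [set M : 'M[R]_(m, n) | forall i j, lo i j <= M i j <= hi i j] =
    vec_mx @` rbox.
  apply/seteqP; split => [M Mbox|_ [u ubox <-] i j].
    exists (mxvec M); last exact: mxvecK.
    move=> k; case/mxvec_indexP: k => i j.
    by rewrite /= in_itv /= !mxvecE.
  by have := ubox (mxvec_index i j); rewrite /= in_itv /= !mxvecE mxE.
apply: continuous_compact; last first.
  exact: (rV_compact (fun k => @segment_compact R _ _)).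
apply/continuous_subspaceT/continuous_mx => i j.
under eq_fun do rewrite mxE; exact: coord_continuous.
Qed.

Section borel_sets.
Variable T : ptopologicalType.
Local Notation borel := (g_sigma_algebraType (@open T)).

Lemma borel_set_open (A : set T) : open A -> borel_set A.
Proof. exact: sub_sigma_algebra. Qed.

Lemma borel_set_closed (A : set T) : closed A -> borel_set A.
Proof.
move=> cA; rewrite -(setCK A); apply: sigma_algebraC.
by apply: borel_set_open; exact: closed_openC.
Qed.

Lemma borel_setI (A B : set T) : borel_set A -> borel_set B -> borel_set (A `&` B).
Proof. exact: (@measurableI _ borel). Qed.

Lemma borel_setD (A B : set T) : borel_set A -> borel_set B -> borel_set (A `\` B).
Proof. exact: (@measurableD _ borel). Qed.

Lemma borel_bigcup_rat (F : rat -> set T) :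
  (forall q, borel_set (F q)) -> borel_set (\bigcup_q F q).
Proof. exact: (@bigcupT_measurable_rat _ borel). Qed.

End borel_sets.

Lemma continuous_borel_measurable_on (T : ptopologicalType) (U : topologicalType)
    (D : set T) (f : T -> U) :
  borel_set D -> continuous f -> borel_measurable_on D f.
Proof.
move=> mD cf V oV; apply: borel_setI mD _; apply: borel_set_open.
by apply: open_comp oV => x _; exact: cf.
Qed.

Section measurable_selection.
Context {R : realType} {U V : ptopologicalType}.
Context {K : set U} {T : U -> V} {g : U -> R}.
Hypotheses (hausV : hausdorff_space V) (cptK : compact K).
Hypotheses (contT : continuous T) (contg : continuous g).
Hypothesis fiber_strict : forall x y, K x -> K y -> T x = T y -> x != y ->
  exists2 z, K z /\ T z = T x & g z < Num.max (g x) (g y).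

Definition fiber a := K `&` T @^-1` [set a].

Definition fiber_argmin a b := fiber a b /\ forall b', fiber a b' -> g b <= g b'.

Definition selection a := xget point (fiber_argmin a).

Definition sublevel_image (F : set U) (q : rat) :=
  T @` (K `&` F `&` [set b | g b <= ratr q]).

Let closed_image_compact {A : set U} : compact A -> closed (T @` A).
Proof.
move=> cA; apply: compact_closed hausV _.
by apply: continuous_compact cA; exact: continuous_subspaceT.
Qed.

Let min_on_compact {A : set U} : A !=set0 -> compact A ->
  exists2 c, A c & forall t, A t -> g c <= g t.
Proof.
move=> A0 cA; have [c Ac cmin] := compact_EVT_min A0 cA (continuous_subspaceT contg).
by exists c => [|t At]; [rewrite inE in Ac|apply: cmin; rewrite inE].
Qed.

Lemma compact_fiber a : compact (fiber a).
Proof.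
apply: compact_closedI cptK _; apply: preimage_closed; first by move=> x _; exact: contT.
exact/accessible_closed_set1/hausdorff_accessible.
Qed.

Lemma fiber_argmin_exists a : (T @` K) a -> exists b, fiber_argmin a b.
Proof.
move=> [b0 Kb0 Tb0]; have fiber_ne : fiber a !=set0 by exists b0.
by have [b fb bmin] := min_on_compact fiber_ne (compact_fiber a); exists b.
Qed.

Lemma fiber_argmin_unique a b b' : fiber_argmin a b -> fiber_argmin a b' -> b = b'.
Proof.
move=> [[Kb Tb] bmin] [[Kb' Tb'] b'min]; apply/eqP/negPn/negP => neq.
have [z [Kz Tz]] := fiber_strict b b' Kb Kb' (etrans Tb (esym Tb')) neq.
have fz : fiber a z by split; rewrite //= Tz.
by rewrite lt_max !ltNge bmin // b'min.
Qed.

Lemma selection_argmin a : (T @` K) a -> fiber_argmin a (selection a).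
Proof. by move=> aK; apply: xgetPex; exact: fiber_argmin_exists. Qed.

Lemma selection_fiber a : (T @` K) a -> K (selection a) /\ T (selection a) = a.
Proof. by case/selection_argmin => -[]. Qed.

Lemma selection_separated (F : set U) a : closed F -> (T @` K) a ->
  ~ F (selection a) ->
  exists q : rat, g (selection a) < ratr q /\ forall b, fiber a b -> F b -> ratr q < g b.
Proof.
move=> cF aK Fs; have [_ smin] := selection_argmin a aK.
suff [c lt_c c_le] : exists2 c, g (selection a) < c &
    forall b, fiber a b -> F b -> c <= g b.
  have [q] := rat_in_itvoo lt_c; rewrite in_itv /= => /andP[q1 q2].
  by exists q; split => // b fb Fb; exact: lt_le_trans q2 (c_le b fb Fb).
have [[b' [fb' Fb'] b'min]|noF] := pselect (exists2 b', fiber a b' /\ F b' &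
    forall b, fiber a b /\ F b -> g b' <= g b).
  exists (g b') => [|b fb Fb]; last exact: b'min.
  rewrite lt_neqAle smin // andbT; apply/eqP => eq_g; apply: Fs.
  suff -> : selection a = b' by [].
  apply: fiber_argmin_unique (selection_argmin a aK) _.
  by split => // b fb; rewrite -eq_g; exact: smin.
exists (g (selection a) + 1) => [|b fb Fb]; first by rewrite ltrDl.
exfalso; apply: noF; apply: min_on_compact; first by exists b.
exact: compact_closedI (compact_fiber a) cF.
Qed.

Lemma closed_sublevel_image F q : closed F -> closed (sublevel_image F q).
Proof.
move=> cF; apply: closed_image_compact; rewrite -setIA.
apply: compact_closedI cptK (closedI cF _).
exact: preimage_closed (fun x _ => contg x) (@closed_le R (ratr q)).
Qed.

Lemma selection_preimage_closed (F : set U) : closed F ->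
  (T @` K) `&` selection @^-1` F =
  (T @` K) `\` \bigcup_q (sublevel_image setT q `\` sublevel_image F q).
Proof.
move=> cF; apply/seteqP; split => a.
  move=> [aK Fs]; split => // -[q _ [[b [[Kb _] gb] Tb] notF]]; apply: notF.
  have [[Ks Ts] smin] := selection_argmin a aK.
  exists (selection a) => //; split => //.
  by apply: le_trans gb; apply: smin.
move=> [aK notU]; split => //; apply: contrapT => Fs.
have [q [lt_q sep]] := selection_separated F a cF aK Fs.
apply: notU; exists q => //; split.
  have [Ks Ts] := selection_fiber a aK.
  by exists (selection a) => //; split => //; exact: ltW.
by move=> [b [[Kb Fb] gb] Tb]; move: (sep b (conj Kb Tb) Fb); rewrite ltNge gb.
Qed.

Lemma selection_measurable : borel_measurable_on (T @` K) selection.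
Proof.
move=> W oW; have cTK := closed_image_compact cptK.
have -> : (T @` K) `&` selection @^-1` W =
    (T @` K) `\` ((T @` K) `&` selection @^-1` (~` W)).
  apply/seteqP; split => a [aK aW]; split => //; first by case.
  by apply: contrapT => nW; exact: aW.
apply: borel_setD; first exact: borel_set_closed.
rewrite selection_preimage_closed; last exact: open_closedC.
apply: borel_setD; first exact: borel_set_closed.
apply: borel_bigcup_rat => q; apply: borel_setD; apply: borel_set_closed.
  exact/closed_sublevel_image/closedT.
exact/closed_sublevel_image/open_closedC.
Qed.

Lemma exists_measurable_selection : exists Psi : V -> U,
  borel_measurable_on (T @` K) Psi /\ forall a, (T @` K) a -> K (Psi a) /\ T (Psi a) = a.
Proof. by exists selection; split; [exact: selection_measurable|exact: selection_fiber]. Qed.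

End measurable_selection.

Lemma shift_below_min_in_box {R : realFieldType} {I : finType} (i0 : I)
    (x : I -> R) (m a b : R) :
  \sum_i x i = 0 -> (forall i, m <= x i) -> (forall i, x i - m <= a + b) ->
  -b <= -b - m <= a /\ forall i, -b <= x i + (-b - m) <= a.
Proof.
move=> x_sum m_le spread; have I_gt0 : (0 < #|I|)%N by apply/card_gt0P; exists i0.
have m_le0 : m <= 0.
  have : \sum_(i : I) m <= \sum_i x i by apply: ler_sum => i _; exact: m_le.
  by rewrite x_sum sumr_const pmulrn_lle0.
have m_ge : - m <= a + b.
  have : \sum_(i : I) (x i - m) <= \sum_(i : I) (a + b) by apply: ler_sum.
  by rewrite sumrB x_sum !sumr_const sub0r -mulNrn ler_pMn2r.
split=> [|i]; first by apply/andP; split; lra.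
by have := m_le i; have := spread i; move=> *; apply/andP; split; lra.
Qed.

Lemma half_add_self (R : numFieldType) (V : lmodType R) (x : V) : 2^-1 *: (x + x) = x.
Proof. by rewrite -mulr2n -(scaler_nat 2 x) scalerA mulVf ?pnatr_eq0 // scale1r. Qed.

Section gamma_map.
Context {R : realType} {d : nat}.
Variable sigma : 'M[R]_d.

Definition gamma_of (beta : 'M[R]_d) := sigma *m sigma^T + sigma *m beta + beta^T *m sigma^T.

Lemma continuous_gamma_of : continuous gamma_of.
Proof.
have -> : gamma_of =
    cst (sigma *m sigma^T) + mulmx sigma + (mulmx^~ sigma^T \o trmx) by [].
move=> beta; apply: continuousD; first apply: continuousD.
- exact: cst_continuous.
- exact: continuous_mulmxl.
- by apply: continuous_comp; [exact: continuous_trmx|exact: continuous_mulmxr].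
Qed.

Lemma gamma_of_midpoint x y :
  gamma_of (2^-1 *: (x + y)) = 2^-1 *: (gamma_of x + gamma_of y).
Proof.
set A := sigma *m sigma^T; pose L b := sigma *m b + b^T *m sigma^T.
have gammaE b : gamma_of b = A + L b by rewrite /gamma_of addrA.
have L_mid : L (2^-1 *: (x + y)) = 2^-1 *: (L x + L y).
  rewrite /L -scalemxAr linearZ /= -scalemxAl -scalerDr mulmxDr.
  by rewrite [(x + y)^T]linearD /= mulmxDl addrACA.
by rewrite !gammaE L_mid [in RHS]addrACA [in RHS]scalerDr half_add_self.
Qed.

End gamma_map.

Section sqr_frobenius.
Context {R : realType} {m n : nat}.
Implicit Types x y : 'M[R]_(m, n).

Definition sqr_frobenius x := \sum_i \sum_j x i j ^+ 2.

Lemma continuous_sqr_frobenius : continuous sqr_frobenius.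
Proof.
apply: continuous_sum => i; apply: continuous_sum => j x.
exact: continuousM (@coord_continuous _ _ _ i j x) (@coord_continuous _ _ _ i j x).
Qed.

Lemma sqr_frobenius_gt0 x : x != 0 -> 0 < sqr_frobenius x.
Proof.
move=> /eqP x_neq0; have [i [j xij]] : exists i j, x i j != 0.
  apply: contrapT => x0; apply: x_neq0; apply/matrixP => i j; rewrite mxE.
  by apply/eqP/negPn/negP => xij; apply: x0; exists i, j.
have sum_sqr_ge0 (I : finType) (P : pred I) (F : I -> R) :
    0 <= \sum_(k | P k) F k ^+ 2 by apply: sumr_ge0 => k _; exact: sqr_ge0.
rewrite /sqr_frobenius (bigD1 i) //= (bigD1 j) //= -addrA.
apply: ltr_wpDr; last by rewrite exprn_even_gt0.
by rewrite addr_ge0 // sumr_ge0 // => k _; exact: sum_sqr_ge0.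
Qed.

Lemma sqr_frobenius_midpoint x y :
  sqr_frobenius (2^-1 *: (x + y)) =
  (sqr_frobenius x + sqr_frobenius y) / 2 - sqr_frobenius (x - y) / 4.
Proof.
rewrite /sqr_frobenius -big_split /= !mulr_suml -sumrB; apply: eq_bigr => i _.
rewrite -big_split /= !mulr_suml -sumrB; apply: eq_bigr => j _.
by rewrite !mxE; field.
Qed.

Lemma sqr_frobenius_midpoint_lt x y : x != y ->
  sqr_frobenius (2^-1 *: (x + y)) < Num.max (sqr_frobenius x) (sqr_frobenius y).
Proof.
rewrite -subr_eq0 => /sqr_frobenius_gt0 pos; rewrite sqr_frobenius_midpoint.
apply: lt_le_trans (_ : (sqr_frobenius x + sqr_frobenius y) / 2 <= _).
  by rewrite ltrBlDr ltrDl divr_gt0.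
rewrite ler_pdivrMr // mulr_natr mulr2n.
by apply: lerD; rewrite ?le_max lexx ?orbT.
Qed.

End sqr_frobenius.

Section simplex_frame.
Context {R : realType} {d : nat}.
Variable v : 'I_d.+1 -> 'rV[R]_d.

Definition simplex_mx : 'M[R]_(d.+1, d) := \matrix_j v j.

Lemma BsetE kp km : Bset v kp km = mulmx simplex_mx^T @`
  [set W : 'M[R]_(d.+1, d) | forall j k, 0 <= W j k <= (kp k + km k) / d.+1%:R].
Proof.
apply/seteqP; split => beta.
  move=> [w [w_box w_col]]; exists (\matrix_(j, k) w j k) => [j k|].
    by rewrite mxE; exact: w_box.
  apply/matrixP => t k; move/matrixP/(_ t ord0): (w_col k).
  by rewrite !mxE summxE => ->; apply: eq_bigr => j _; rewrite !mxE mulrC.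
move=> [W W_box <-]; exists (fun j k => W j k); split => // k.
apply/matrixP => t i; rewrite ord1 !mxE summxE; apply: eq_bigr => j _.
by rewrite !mxE mulrC.
Qed.

Lemma compact_Bset kp km : compact (Bset v kp km).
Proof.
rewrite BsetE; apply: continuous_compact.
  exact/continuous_subspaceT/continuous_mulmxl.
have := @compact_mx_box R _ _ 0 (\matrix_(j < d.+1, k < d) ((kp k + km k) / d.+1%:R)).
by under eq_set do under eq_forall do under eq_forall do rewrite !mxE.
Qed.

Lemma Bset_midpoint kp km x y : Bset v kp km x -> Bset v kp km y ->
  Bset v kp km (2^-1 *: (x + y)).
Proof.
rewrite BsetE => -[W W_box <-] [W' W'_box <-].
exists (2^-1 *: (W + W')) => [j k|]; last by rewrite -scalemxAr mulmxDr.
rewrite !mxE; move: (W_box j k) (W'_box j k); set c := (_ / _).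
by move=> /andP[? ?] /andP[? ?]; apply/andP; split; lra.
Qed.

Definition min_coord (beta : 'M[R]_d) k :=
  \big[Order.min/(v ord0 *m beta) ord0 k]_i (v i *m beta) ord0 k.

Definition box_shift (km : 'I_d -> R) (beta : 'M[R]_d) : 'rV[R]_d :=
  \row_k (- km k - min_coord beta k).

Lemma continuous_min_coord k : continuous (min_coord ^~ k).
Proof.
have coord_v j : continuous (fun beta : 'M[R]_d => (v j *m beta) ord0 k).
  move=> beta; apply: (@continuous_comp _ _ _ (mulmx (v j)) (fun M => M ord0 k)).
    exact: continuous_mulmxl.
  exact: coord_continuous.
exact: continuous_bigmin.
Qed.

Lemma continuous_box_shift km : continuous (box_shift km).
Proof.
apply: continuous_mx => i k.
have -> : (fun beta => box_shift km beta i k) = fun beta => - km k - min_coord beta k.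
  by apply/funext => beta; rewrite mxE.
move=> beta.
exact: continuousB (@cst_continuous _ _ (- km k) beta) (continuous_min_coord k beta).
Qed.

Hypothesis v_offdiag : forall i j, i != j -> v i *m (v j)^T = (-1)%:M.
Hypothesis v_sum : \sum_(j < d.+1) v j = 0.

Lemma v_norm i : v i *m (v i)^T = d%:R%:M.
Proof.
have : v i *m (\sum_j v j)^T = 0 by rewrite v_sum trmx0 mulmx0.
rewrite linear_sum mulmx_sumr (bigD1 i) //= (eq_bigr (fun=> (-1)%:M)).
  rewrite sumr_const cardC1 card_ord => /eqP.
  by rewrite addr_eq0 => /eqP ->; rewrite -mulNrn -raddfN opprK -raddfMn.
by move=> j ji; rewrite v_offdiag // eq_sym.
Qed.

Lemma v_mul_simplex_mx i (W : 'M[R]_(d.+1, d)) :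
  v i *m (simplex_mx^T *m W) = d.+1%:R *: row i W - \sum_j row j W.
Proof.
have gram j : (v i *m simplex_mx^T) 0 j = (v i *m (v j)^T) 0 0.
  by rewrite !mxE; apply: eq_bigr => t _; rewrite !mxE.
rewrite mulmxA mulmx_sum_row (bigD1 i) //= [X in _ - X](bigD1 i) //=.
rewrite gram v_norm mxE eqxx mulr1n (eq_bigr (fun j => - row j W)); last first.
  by move=> j ji; rewrite gram v_offdiag 1?eq_sym // mxE eqxx mulr1n scaleN1r.
by rewrite sumrN -natr1 scalerDl scale1r opprD addrA addrK.
Qed.

Lemma sum_v_mul (beta : 'M[R]_d) k : \sum_i (v i *m beta) ord0 k = 0.
Proof. by rewrite -summxE -mulmx_suml v_sum mul0mx mxE. Qed.

Lemma Bset_spread kp km beta : Bset v kp km beta ->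
  forall k i j, (v j *m beta) ord0 k - (v i *m beta) ord0 k <= kp k + km k.
Proof.
rewrite BsetE => -[W W_box <-] k i j; rewrite !v_mul_simplex_mx !(mxE, summxE).
have /andP[W_ge0 _] := W_box i k; have /andP[_ W_le] := W_box j k.
rewrite ler_pdivlMr ?ltr0n // in W_le.
have : 0 <= W i k * d.+1%:R by rewrite mulr_ge0.
set S := \sum_(j0 < d.+1) _; lra.
Qed.

Lemma box_shift_box kp km beta : Bset v kp km beta ->
  box kp km (box_shift km beta) /\
  forall i, box kp km (v i *m beta + box_shift km beta).
Proof.
move=> Bbeta; have spread := Bset_spread _ _ _ Bbeta.
have min_spread k j : (v j *m beta) ord0 k - min_coord beta k <= kp k + km k.
  have : (v j *m beta) ord0 k - (kp k + km k) <= min_coord beta k.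
    apply: le_bigmin => [|i _].
      by have := spread k ord0 j; lra.
    by have := spread k i j; lra.
  lra.
have shift k := shift_below_min_in_box ord0 _ _ _ _ (sum_v_mul beta k)
  (fun i => bigmin_le _ i _) (min_spread k).
split=> [k|i k]; first by rewrite mxE; exact: (shift k).1.
by rewrite mxE [box_shift _ _ _ _]mxE; exact: (shift k).2.
Qed.

End simplex_frame.

Lemma Bset_gamma_fiber_strict {R : realType} {d} (sigma : 'M[R]_d)
    {v : 'I_d.+1 -> 'rV[R]_d} {kp km : 'I_d -> R} x y :
  Bset v kp km x -> Bset v kp km y -> gamma_of sigma x = gamma_of sigma y -> x != y ->
  exists2 z, Bset v kp km z /\ gamma_of sigma z = gamma_of sigma x &
    sqr_frobenius z < Num.max (sqr_frobenius x) (sqr_frobenius y).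
Proof.
move=> Bx By gxy neq; exists (2^-1 *: (x + y)); last exact: sqr_frobenius_midpoint_lt.
split; first exact: Bset_midpoint.
by rewrite gamma_of_midpoint -gxy half_add_self.
Qed.

Theorem lemma3p5 (R : realType) (d : nat) (sigma : 'M[R]_d)
  (kp km : 'I_d -> R) (v : 'I_d.+1 -> 'rV[R]_d) :
  sigma \in unitmx ->
  (forall i, 0 <= kp i) -> (forall i, 0 <= km i) ->
  (forall i j, i != j -> v i *m (v j)^T = (-1)%:M) ->
  \sum_(j < d.+1) v j = 0 ->
  \sum_(j < d.+1) (v j)^T *m v j = d.+1%:R%:M ->
  (exists Psi : 'M[R]_d -> 'M[R]_d,
     borel_measurable_on (Gammaset sigma (Bset v kp km)) Psi /\
     forall a, Gammaset sigma (Bset v kp km) a ->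
       Bset v kp km (Psi a) /\
       a = sigma *m sigma^T + sigma *m Psi a + (Psi a)^T *m sigma^T) /\
  (exists Phi : 'M[R]_d -> 'rV[R]_d,
     borel_measurable_on (Bset v kp km) Phi /\
     forall beta, Bset v kp km beta ->
       box kp km (Phi beta) /\
       forall i, box kp km (v i *m beta + Phi beta)).
Proof.
move=> _ _ _ v_offdiag v_sum _.
have hausM : hausdorff_space 'M[R]_d := @norm_hausdorff _ _.
have cptB := compact_Bset v kp km.
split.
  have [Psi [mPsi PsiP]] := exists_measurable_selection hausM cptB
    (continuous_gamma_of sigma) continuous_sqr_frobenius (Bset_gamma_fiber_strict sigma).
  exists Psi; split=> // a /PsiP[BPsi gPsi].
  by split; last exact/esym.
exists (box_shift v km); split; last by move=> beta; exact: box_shift_box.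
apply: continuous_borel_measurable_on; last exact: continuous_box_shift.
by apply: borel_set_closed; exact: compact_closed hausM cptB.
Qed.
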